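(* Let $P$ be a generic regular hexagon in $\mathbb{R}^3$, $u_1,\ldots,u_6$ a support system of $P$, and $P'=B_1\ldots B_6$ the derived hexagon, $\overline{OB_i}=u_i$. Assume $B_1,B_3,B_5$ are not collinear and let $\Pi_1$ be the plane through them. Then $B_2,B_4,B_6$ lie in one open half-space (or all on $\Pi_1$) at equal distance from $\Pi_1$, so they lie in a plane $\Pi_2$ parallel to $\Pi_1$ (or equal to it). Moreover, if $B'_2,B'_4,B'_6$ denote the orthogonal projections of $B_2,B_4,B_6$ onto $\Pi_1$, then the plane hexagon $B_1B'_2B_3B'_4B_5B'_6$ has oriented area $0$.
   Context: Indices are cyclic mod $6$; $[\cdot,\cdot]$ is the cross product. For a closed hexagon $A_1\ldots A_6$ put $v_1=\overline{A_1A_2},\ldots,v_6=\overline{A_6A_1}$. The hexagon is generic if any two consecutive $v_i,v_{i+1}$ are not collinear and any three consecutive $v_i,v_{i+1},v_{i+2}$ are not coplanar. A support system is a tuple $u_1,\ldots,u_6$ with $[u_i,u_{i+1}]=v_{i+1}$ for all $i$; a generic hexagon is regular if it has a support system. The derived hexagon for a support system is $B_1\ldots B_6$ with $\overline{OB_i}=u_i$ for a fixed origin $O$. A closed polygon $C_1\ldots C_n$ has oriented area $0$ if $\sum_i[\overline{OC_i},\overline{OC_{i+1}}]=0$ (independent of $O$); for a plane polygon this means its signed area in its plane is zero. *)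

From HB Require Import structures.
From mathcomp Require Import all_boot all_order all_algebra.
Set Implicit Arguments. Unset Strict Implicit. Unset Printing Implicit Defensive.
Import Order.TTheory GRing.Theory Num.Theory.
Local Open Scope ring_scope.

Notation vec R := 'rV[R]_3.

Notation nxt := (@ordS _).

Definition cross {R : comNzRingType} (u v : vec R) : vec R :=
  \row_(k < 3) (u 0 (nxt k) * v 0 (nxt (nxt k)) - u 0 (nxt (nxt k)) * v 0 (nxt k)).

Definition dot {R : comNzRingType} (u v : vec R) : R := \sum_(k < 3) u 0 k * v 0 k.

(* a closed hexagon is given by its vertices A_1..A_6, indexed by 'I_6 (A_1 = A 0) *)
Definition hexagon (R : comNzRingType) := 'I_6 -> vec R.

Definition sides {R : comNzRingType} (A : hexagon R) (i : 'I_6) : vec R :=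
  A (nxt i) - A i.

Definition generic {R : comNzRingType} (A : hexagon R) : Prop :=
  (forall i, cross (sides A i) (sides A (nxt i)) != 0) /\
  (forall i, dot (sides A i) (cross (sides A (nxt i)) (sides A (nxt (nxt i)))) != 0).

Definition support_system {R : comNzRingType} (A : hexagon R) (u : 'I_6 -> vec R) : Prop :=
  forall i, cross (u i) (u (nxt i)) = sides A (nxt i).

Definition regular {R : comNzRingType} (A : hexagon R) : Prop :=
  generic A /\ exists u, support_system A u.

Definition derived {R : comNzRingType} (O : vec R) (u : 'I_6 -> vec R) : hexagon R :=
  fun i => O + u i.

(* oriented area zero of a closed n-gon: sum_i [O C_i, O C_{i+1}] = 0, with O the origin *)
Definition oriented_area_zero {R : comNzRingType} {n : nat} (C : 'I_n -> vec R) : Prop :=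
  \sum_(i < n) cross (C i) (C (nxt i)) = 0.

(* orthogonal projection of X onto the plane through P with normal n0 (n0 != 0) *)
Definition proj_plane {R : fieldType} (P n0 X : vec R) : vec R :=
  X - (dot (X - P) n0 / dot n0 n0) *: n0.

(* signed distance of X from the plane through P with normal n0, up to the
   positive factor 1/|n0| (same sign <=> same open half-space) *)
Definition sdist {R : comNzRingType} (P n0 X : vec R) : R := dot (X - P) n0.

From HB Require Import structures.
From mathcomp Require Import all_boot all_order all_algebra.
From mathcomp Require Import ring.
Set Implicit Arguments. Unset Strict Implicit. Unset Printing Implicit Defensive.
Import Order.TTheory GRing.Theory Num.Theory.
Local Open Scope ring_scope.

(* Write S(C) = \sum_i [C_i, C_{i+1}] for the oriented area vector of a
   closed polygon C.  The proof rests on three facts.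
   - Closure: for a support system u, [u_i, u_{i+1}] = v_{i+1}, and the
     sides of a closed polygon sum to 0, so S(u) = 0; S is invariant under
     translation, hence S(B) = 0 for the derived hexagon B_i = O + u_i.
   - Height identities: with n = [B_3 - B_1, B_5 - B_1] (the normal of Pi_1),
     the differences of the signed distances of B_2, B_4, B_6 from Pi_1 are
     S(B).(B_5 - B_1) and S(B).(B_5 - B_3); they vanish since S(B) = 0.
   - Shift invariance: moving B_2, B_4, B_6 by one common vector w does not
     change S(B).  Since the three heights agree, projecting onto Pi_1 is such
     a common shift, so the projected hexagon has S = S(B) = 0.
   The identities hold for arbitrary vectors.  In the file vertices are indexed
   from 0 (B_1 is B 0). *)

Section Coordinates.
Variable R : comNzRingType.

Definition vec3 (a b c : R) : vec R := \row_(k < 3) [:: a; b; c]`_k.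

Lemma vec3P (v : vec R) : exists a b c, v = vec3 a b c.
Proof.
exists (v 0 (inord 0)), (v 0 (inord 1)), (v 0 (inord 2)).
apply/rowP => -[[|[|[|k]]] lt_k3] //=; rewrite !mxE /=;
  by congr (v _ _); apply/val_inj; rewrite /= inordK.
Qed.

Lemma cross_vec3 a b c d e f :
  cross (vec3 a b c) (vec3 d e f) = vec3 (b * f - c * e) (c * d - a * f) (a * e - b * d).
Proof. by apply/rowP => -[[|[|[|k]]] lt_k3] //=; rewrite !mxE /=. Qed.

Lemma dot_vec3 a b c d e f : dot (vec3 a b c) (vec3 d e f) = a * d + b * e + c * f.
Proof. by rewrite /dot !big_ord_recr big_ord0 /= !mxE /= add0r. Qed.

Lemma add_vec3 a b c d e f : vec3 a b c + vec3 d e f = vec3 (a + d) (b + e) (c + f).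
Proof. by apply/rowP => -[[|[|[|k]]] lt_k3]; rewrite !mxE. Qed.

Lemma opp_vec3 a b c : - vec3 a b c = vec3 (- a) (- b) (- c).
Proof. by apply/rowP => -[[|[|[|k]]] lt_k3]; rewrite !mxE. Qed.

Lemma zero_vec3 : 0 = vec3 0 0 0.
Proof. by apply/rowP => -[[|[|[|k]]] lt_k3]; rewrite !mxE. Qed.

End Coordinates.

Ltac in_coordinates :=
  repeat match goal with
  | v : matrix _ 1 3 |- _ =>
      let a := fresh "a" in let b := fresh "b" in let c := fresh "c" in
      have [a [b [c ->]]] := vec3P v; clear v
  end;
  rewrite ?zero_vec3 ?(opp_vec3, add_vec3, cross_vec3, dot_vec3).

Section Polygons.
Variable R : comNzRingType.

Lemma crossDl (x y z : vec R) : cross (x + y) z = cross x z + cross y z.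
Proof. in_coordinates; congr (vec3 _ _ _); ring. Qed.

Lemma cross0l (z : vec R) : cross 0 z = 0.
Proof. in_coordinates; congr (vec3 _ _ _); ring. Qed.

Lemma dot0l (z : vec R) : dot 0 z = 0.
Proof. in_coordinates; ring. Qed.

Lemma cross_suml (I : Type) (r : seq I) (F : I -> vec R) (z : vec R) :
  cross (\sum_(i <- r) F i) z = \sum_(i <- r) cross (F i) z.
Proof. exact: (big_morph (cross^~ z) (fun x y => crossDl x y z) (cross0l z)). Qed.

Lemma cross_translate (O x y : vec R) :
  cross (O + x) (O + y) = cross x y + cross (x - y) O.
Proof. in_coordinates; congr (vec3 _ _ _); ring. Qed.

Lemma cyclic_differences_sum0 (V : zmodType) (n : nat) (C : 'I_n -> V) :
  \sum_(i < n) (C (nxt i) - C i) = 0.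
Proof. by rewrite sumrB [X in _ - X](reindex_inj (@ordS_inj n)) subrr. Qed.

Lemma oriented_area_zero_translate (n : nat) (O : vec R) (C : 'I_n -> vec R) :
  oriented_area_zero C -> oriented_area_zero (fun i => O + C i).
Proof.
rewrite /oriented_area_zero => area0.
under eq_bigr do rewrite cross_translate.
rewrite big_split /= area0 add0r -cross_suml.
rewrite (eq_bigr (fun i => - (C (nxt i) - C i))) => [|i _]; last by rewrite opprB.
by rewrite sumrN cyclic_differences_sum0 oppr0 cross0l.
Qed.

(* The vectors of a support system form a polygon of oriented area zero:
   their consecutive cross products are the sides of the closed hexagon. *)
Lemma support_system_area0 (A : hexagon R) (u : 'I_6 -> vec R) :
  support_system A u -> oriented_area_zero u.
Proof.
move=> supp; rewrite /oriented_area_zero.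
under eq_bigr do rewrite supp.
rewrite -(reindex_inj (@ordS_inj 6) (P := xpredT) (F := sides A)).
exact: cyclic_differences_sum0.
Qed.

End Polygons.

Section Hexagons.
Variable R : comNzRingType.

Definition area6 (B0 B1 B2 B3 B4 B5 : vec R) : vec R :=
  cross B0 B1 + cross B1 B2 + cross B2 B3 + cross B3 B4 + cross B4 B5 + cross B5 B0.

Lemma area6_sum (C : 'I_6 -> vec R) :
  \sum_(i < 6) cross (C i) (C (nxt i)) =
  area6 (C (inord 0)) (C (inord 1)) (C (inord 2)) (C (inord 3)) (C (inord 4)) (C (inord 5)).
Proof.
rewrite (eq_bigr (fun i : 'I_6 => cross (C (inord i)) (C (inord (i.+1 %% 6)))));
  last by move=> i _; rewrite inord_val; congr (cross _ (C _));
          apply/val_inj; rewrite /= inordK ?ltn_mod.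
rewrite -(big_mkord xpredT (fun k => cross (C (inord k)) (C (inord (k.+1 %% 6))))).
by rewrite /index_iota /= !big_cons big_nil addr0 !addrA.
Qed.

Lemma height_difference13 (B0 B1 B2 B3 B4 B5 : vec R) :
  let h := sdist B0 (cross (B2 - B0) (B4 - B0)) in
  h B1 - h B3 = dot (area6 B0 B1 B2 B3 B4 B5) (B4 - B0).
Proof. rewrite /sdist /area6; in_coordinates; ring. Qed.

Lemma height_difference15 (B0 B1 B2 B3 B4 B5 : vec R) :
  let h := sdist B0 (cross (B2 - B0) (B4 - B0)) in
  h B1 - h B5 = dot (area6 B0 B1 B2 B3 B4 B5) (B4 - B2).
Proof. rewrite /sdist /area6; in_coordinates; ring. Qed.

Lemma area6_shift_odd (w B0 B1 B2 B3 B4 B5 : vec R) :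
  area6 B0 (B1 - w) B2 (B3 - w) B4 (B5 - w) = area6 B0 B1 B2 B3 B4 B5.
Proof. rewrite /area6; in_coordinates; congr (vec3 _ _ _); ring. Qed.

End Hexagons.

Theorem theorem5p3 (R : realFieldType) (A : hexagon R) (u : 'I_6 -> vec R) (O : vec R) :
  regular A -> support_system A u ->
  let B := derived O u in
  let n0 := cross (B (inord 2) - B (inord 0)) (B (inord 4) - B (inord 0)) in
  n0 != 0 ->
  (sdist (B (inord 0)) n0 (B (inord 1)) = sdist (B (inord 0)) n0 (B (inord 3)) /\
   sdist (B (inord 0)) n0 (B (inord 3)) = sdist (B (inord 0)) n0 (B (inord 5))) /\
  oriented_area_zero
    (fun i : 'I_6 => if odd i then proj_plane (B (inord 0)) n0 (B i) else B i).
Proof.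
move=> _ supp B n0 _.
have areaB0 : area6 (B (inord 0)) (B (inord 1)) (B (inord 2))
                    (B (inord 3)) (B (inord 4)) (B (inord 5)) = 0.
  rewrite -area6_sum; exact/oriented_area_zero_translate/support_system_area0/supp.
set h := sdist (B (inord 0)) n0.
have h13 : h (B (inord 1)) = h (B (inord 3)).
  by apply/eqP; rewrite -subr_eq0 (height_difference13 _ _ _ _ _ (B (inord 5))) areaB0 dot0l.
have h15 : h (B (inord 1)) = h (B (inord 5)).
  by apply/eqP; rewrite -subr_eq0 (height_difference15 _ _ _ (B (inord 3))) areaB0 dot0l.
split; first by rewrite -h13 h15.
rewrite /oriented_area_zero area6_sum !inordK //= /proj_plane.
by rewrite -!/(sdist _ _ _) -/h -h13 -h15 area6_shift_odd.
Qed.
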